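(* Under the setting below, assume $G$ is convex, the sampling is essentially cyclic with period $T\ge1$ (every $i\in[N]$ belongs to at least one of $I^{k+1},\dots,I^{k+T}$ for every $k\ge0$), and each $f_i$ is $\mu_{f_i}$-strongly convex ($\mu_{f_i}>0$). Let $\delta:=\min_{i}\frac{\gamma_i\mu_{f_i}}{N}$, $\Delta:=\max_i\frac{\gamma_iL_{f_i}}{N}$, $\bm x^\star$ the unique minimizer of $\Phi$, $\mu_F:=\frac1N\operatorname{blockdiag}(\mu_{f_1}I_{n_1},\dots,\mu_{f_N}I_{n_N})$ and $c:=\frac{\delta(1-\Delta)}{N(1+T(1-\delta))^2(1-\delta)}$. Then for all $\nu\in\mathbb N$: $\Phi^{\mathrm{FB}}_\Gamma(\bm x^{T(\nu+1)})-\min\Phi\le(1-c)(\Phi^{\mathrm{FB}}_\Gamma(\bm x^{T\nu})-\min\Phi)$, $\Phi(\bm z^{T\nu})-\min\Phi\le(\Phi(\bm x^0)-\min\Phi)(1-c)^\nu$, $\frac12\|\bm z^{T\nu}-\bm x^\star\|^2_{\mu_F}\le(\Phi(\bm x^0)-\min\Phi)(1-c)^\nu$. If the sampling is shuffled cyclic, i.e. $I^{k+1}=\{\pi_{\lfloor k/N\rfloor}(\mathrm{mod}(k,N)+1)\}$ for permutations $\pi_0,\pi_1,\dots$ of $[N]$ (which includes the cyclic rule $I^{k+1}=\{\mathrm{mod}(k,N)+1\}$), then the same three inequalities hold with $T$ replaced by $N$ and with $c:=\frac{\delta(1-\Delta)}{N(2-\delta)^2(1-\delta)}$.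
   Context: Setting: $N\ge1$, $n=\sum_{i=1}^N n_i$, $\bm x=(x_1,\dots,x_N)$ with $x_i\in\mathbb R^{n_i}$; $\Phi=F+G$ with $F(\bm x)=\frac1N\sum_i f_i(x_i)$, each $f_i:\mathbb R^{n_i}\to\mathbb R$ differentiable with $L_{f_i}$-Lipschitz gradient, $G:\mathbb R^n\to\mathbb R\cup\{+\infty\}$ proper lsc, $\arg\min\Phi\ne\emptyset$. $\gamma_i\in(0,N/L_{f_i})$, $\Gamma=\operatorname{blockdiag}(\gamma_1I_{n_1},\dots,\gamma_NI_{n_N})$, $\|x\|_V^2=\langle x,Vx\rangle$, $\operatorname{prox}_G^{V}(u)=\arg\min_w\{G(w)+\frac12\|w-u\|_V^2\}$, $\mathbf T(\bm x)=\operatorname{prox}_G^{\Gamma^{-1}}(\bm x-\Gamma\nabla F(\bm x))$. Forward-backward envelope: $\Phi^{\mathrm{FB}}_\Gamma(\bm x):=\inf_{\bm w}\{F(\bm x)+\langle\nabla F(\bm x),\bm w-\bm x\rangle+G(\bm w)+\frac12\|\bm w-\bm x\|^2_{\Gamma^{-1}}\}$. Algorithm BC: given $\bm x^0\in\mathbb R^n$, for $k=0,1,\dots$: pick $\bm z^k\in\mathbf T(\bm x^k)$; select $I^{k+1}\subseteq[N]$; set $x_i^{k+1}=z_i^k$ for $i\in I^{k+1}$ and $x_i^{k+1}=x_i^k$ otherwise. *)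

From Stdlib Require Import Reals ClassicalEpsilon.
Open Scope R_scope.

Inductive ER : Type := ninf | fin (r : R) | pinf.

Definition ER_le (a b : ER) : Prop :=
  match a, b with
  | ninf, _ => True
  | _, pinf => True
  | fin x, fin y => x <= y
  | _, _ => False
  end.

Definition ER_lt (a b : ER) : Prop := ER_le a b /\ a <> b.

Definition ER_addr (r : R) (e : ER) : ER :=
  match e with ninf => ninf | fin y => fin (r + y) | pinf => pinf end.

Definition is_glb (S : ER -> Prop) (y : ER) : Prop :=
  (forall v, S v -> ER_le y v) /\
  (forall y', (forall v, S v -> ER_le y' v) -> ER_le y' y).

(* infimum of a set of extended reals (always exists in the complete lattice) *)
Definition ER_inf (S : ER -> Prop) : ER := epsilon (inhabits ninf) (is_glb S).

Fixpoint fsum (m : nat) (g : nat -> R) : R :=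
  match m with O => 0 | S m' => fsum m' g + g m' end.

(* bmin m g = min (g 0, ..., g m), bmax likewise *)
Fixpoint bmin (m : nat) (g : nat -> R) : R :=
  match m with O => g O | S m' => Rmin (bmin m' g) (g m) end.
Fixpoint bmax (m : nat) (g : nat -> R) : R :=
  match m with O => g O | S m' => Rmax (bmax m' g) (g m) end.

(* ---------- the block space R^{n_1} x ... x R^{n_N} ----------
   A vector of R^m is represented by u : nat -> R (only coordinates j < m matter);
   a block vector x = (x_1,...,x_N) by x : nat -> nat -> R, x i j being
   coordinate j of block i (only i < N, j < n i matter).  Blocks and coordinates
   are 0-indexed. *)
Definition vec := nat -> R.
Definition bvec := nat -> nat -> R.

Definition ip (m : nat) (u v : vec) : R := fsum m (fun j => u j * v j).
Definition nrm (m : nat) (u : vec) : R := sqrt (ip m u u).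
Definition vsub (u v : vec) : vec := fun j => u j - v j.
Definition vcomb (t : R) (u v : vec) : vec := fun j => t * u j + (1 - t) * v j.

Definition bsub (x y : bvec) : bvec := fun i j => x i j - y i j.
Definition bcomb (t : R) (x y : bvec) : bvec := fun i j => t * x i j + (1 - t) * y i j.
(* weighted squared norm  sum_i w_i ||x_i||^2  (norm induced by blockdiag(w_i I)) *)
Definition wbnsq (N : nat) (n : nat -> nat) (w : nat -> R) (x : bvec) : R :=
  fsum N (fun i => w i * ip (n i) (x i) (x i)).
Definition bnrm (N : nat) (n : nat -> nat) (x : bvec) : R :=
  sqrt (wbnsq N n (fun _ => 1) x).
Definition bip (N : nat) (n : nat -> nat) (x y : bvec) : R :=
  fsum N (fun i => ip (n i) (x i) (y i)).

Definition fun_on (m : nat) (h : vec -> R) : Prop :=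
  forall u v, (forall j, (j < m)%nat -> u j = v j) -> h u = h v.
Definition bfun_on (N : nat) (n : nat -> nat) (H : bvec -> ER) : Prop :=
  forall x y, (forall i j, (i < N)%nat -> (j < n i)%nat -> x i j = y i j) -> H x = H y.

Definition has_gradient (m : nat) (h : vec -> R) (g : vec -> vec) : Prop :=
  forall u eps, 0 < eps -> exists del, 0 < del /\
    forall v, nrm m (vsub v u) < del ->
      Rabs (h v - h u - ip m (g u) (vsub v u)) <= eps * nrm m (vsub v u).

Definition lipschitz_grad (m : nat) (g : vec -> vec) (L : R) : Prop :=
  forall u v, nrm m (vsub (g u) (g v)) <= L * nrm m (vsub u v).

Definition strongly_convex (m : nat) (h : vec -> R) (mu : R) : Prop :=
  forall u v t, 0 <= t <= 1 ->
    h (vcomb t u v) <= t * h u + (1 - t) * h v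
                       - mu / 2 * t * (1 - t) * (nrm m (vsub u v)) ^ 2.

Definition proper (G : bvec -> ER) : Prop :=
  (forall x, G x <> ninf) /\ exists x, G x <> pinf.

Definition lsc (N : nat) (n : nat -> nat) (G : bvec -> ER) : Prop :=
  forall x a, ER_lt (fin a) (G x) -> exists del, 0 < del /\
    forall y, bnrm N n (bsub y x) < del -> ER_lt (fin a) (G y).

Definition convexG (G : bvec -> ER) : Prop :=
  forall x y a b t, G x = fin a -> G y = fin b -> 0 < t < 1 ->
    ER_le (G (bcomb t x y)) (fin (t * a + (1 - t) * b)).

Section Problem.
Variables (N : nat) (n : nat -> nat) (f : nat -> vec -> R) (grad : nat -> vec -> vec)
          (G : bvec -> ER) (gamma : nat -> R).

Definition Fsm (x : bvec) : R := / INR N * fsum N (fun i => f i (x i)).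
Definition gradF (x : bvec) : bvec := fun i j => / INR N * grad i (x i) j.
Definition Phi (x : bvec) : ER := ER_addr (Fsm x) (G x).

Definition is_minimizer (xs : bvec) : Prop := forall y, ER_le (Phi xs) (Phi y).

(* z ∈ T(x) = prox_G^{Γ^{-1}} (x - Γ ∇F(x)) *)
Definition prox_obj (u w : bvec) : ER :=
  ER_addr (1 / 2 * wbnsq N n (fun i => / gamma i) (bsub w u)) (G w).
Definition fb_step (x : bvec) : bvec := fun i j => x i j - gamma i * gradF x i j.
Definition in_T (x z : bvec) : Prop :=
  forall w, ER_le (prox_obj (fb_step x) z) (prox_obj (fb_step x) w).

Definition FBE (x : bvec) : ER :=
  ER_inf (fun v => exists w, v =
    ER_addr (Fsm x + bip N n (gradF x) (bsub w x)
             + 1 / 2 * wbnsq N n (fun i => / gamma i) (bsub w x)) (G w)).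

(* Algorithm BC: z^k ∈ T(x^k); x^{k+1}_i = z^k_i if i ∈ I^{k+1}, else x^k_i.
   I k i  means  i ∈ I^k. *)
Definition algorithm_BC (I : nat -> nat -> bool) (x z : nat -> bvec) : Prop :=
  (forall k i, I (S k) i = true -> (i < N)%nat) /\
  (forall k, in_T (x k) (z k)) /\
  (forall k i, x (S k) i = if I (S k) i then z k i else x k i).

Definition essentially_cyclic (I : nat -> nat -> bool) (T : nat) : Prop :=
  forall k i, (i < N)%nat -> exists t, (1 <= t <= T)%nat /\ I (k + t)%nat i = true.

Definition perm_of_N (p : nat -> nat) : Prop :=
  (forall j, (j < N)%nat -> (p j < N)%nat) /\
  (forall j1 j2, (j1 < N)%nat -> (j2 < N)%nat -> p j1 = p j2 -> j1 = j2).

(* shuffled cyclic sampling: I^{k+1} = { pi_{floor(k/N)} (k mod N) } (0-indexed) *)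
Definition shuffled_cyclic (I : nat -> nat -> bool) : Prop :=
  exists pi : nat -> nat -> nat, (forall p, perm_of_N (pi p)) /\
    forall k i, I (S k) i = true <-> i = pi (Nat.div k N) (Nat.modulo k N).

Definition linear_rates (mu : nat -> R) (x z : nat -> bvec) (P : nat) (c : R) : Prop :=
  forall xs m, is_minimizer xs -> Phi xs = fin m -> forall nu : nat,
    (forall b, FBE (x (P * nu)%nat) = fin b ->
       ER_le (FBE (x (P * (nu + 1))%nat)) (fin (m + (1 - c) * (b - m)))) /\
    (forall a, Phi (x O) = fin a ->
       ER_le (Phi (z (P * nu)%nat)) (fin (m + (a - m) * (1 - c) ^ nu)) /\
       1 / 2 * wbnsq N n (fun i => mu i / INR N) (bsub (z (P * nu)%nat) xs)
         <= (a - m) * (1 - c) ^ nu).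

End Problem.

(* The Lyapunov function is the forward-backward envelope: for z in T(x) its value is that of the
   FBE model at z.  A block update of the algorithm decreases it by (1 - Delta)/2 times the squared
   length of the step in the metric Gamma^-1 (descent lemma), and strong convexity gives the error
   bound FBE(x) - min Phi <= (1/delta - 1)/2 ||x - z||^2.  If every block is updated in a window of
   P iterations starting at k0, the residual ||x^k0 - z^k0||^2 is at most
   N ((1 + theta) + (1 + 1/theta) (1 - delta)^2 beta) times the total squared step length, because T
   is a (1 - delta)-contraction and beta bounds the drift of the iterates inside the window
   (beta = T for essentially cyclic sampling; beta = 1 for shuffled cyclic sampling, where each block
   moves once per epoch).  Choosing theta = (1 - delta) T, resp. theta = 1 - delta, yields the rate c.
   The bounds on Phi(z) and on the distance to the minimizer follow from Phi(z) <= FBE(x) and the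
   quadratic growth of Phi around its minimizer. *)

From Stdlib Require Import Reals Lra Lia Psatz ClassicalEpsilon FunctionalExtensionality Wf_nat FinFun.
Open Scope R_scope.

(** * Finite sums and inner products *)

Lemma fsum_ext m g h : (forall j, (j < m)%nat -> g j = h j) -> fsum m g = fsum m h.
Proof.
  induction m as [|m IH]; simpl; intros H; [reflexivity|].
  rewrite IH by (intros; apply H; lia). rewrite (H m) by lia. reflexivity.
Qed.

Lemma fsum_le m g h : (forall j, (j < m)%nat -> g j <= h j) -> fsum m g <= fsum m h.
Proof.
  induction m as [|m IH]; simpl; intros H; [lra|].
  pose proof (IH (fun j Hj => H j ltac:(lia))). pose proof (H m ltac:(lia)). lra.
Qed.

Lemma fsum_plus m g h : fsum m (fun j => g j + h j) = fsum m g + fsum m h.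
Proof. induction m as [|m IH]; simpl; [ring|]. rewrite IH; ring. Qed.

Lemma fsum_minus m g h : fsum m (fun j => g j - h j) = fsum m g - fsum m h.
Proof. induction m as [|m IH]; simpl; [ring|]. rewrite IH; ring. Qed.

Lemma fsum_opp m g : fsum m (fun j => - g j) = - fsum m g.
Proof. induction m as [|m IH]; simpl; [ring|]. rewrite IH; ring. Qed.

Lemma fsum_scal m c g : fsum m (fun j => c * g j) = c * fsum m g.
Proof. induction m as [|m IH]; simpl; [ring|]. rewrite IH; ring. Qed.

Lemma fsum_const m c : fsum m (fun _ => c) = INR m * c.
Proof. induction m as [|m IH]; simpl fsum; [simpl; ring|]. rewrite IH, S_INR. ring. Qed.

Lemma fsum_zero m : fsum m (fun _ => 0) = 0.
Proof. rewrite fsum_const. ring. Qed.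

Lemma fsum_nonneg m g : (forall j, (j < m)%nat -> 0 <= g j) -> 0 <= fsum m g.
Proof. intros H. rewrite <- (fsum_zero m). apply fsum_le; auto. Qed.

Lemma fsum_term_le m g i :
  (forall j, (j < m)%nat -> 0 <= g j) -> (i < m)%nat -> g i <= fsum m g.
Proof.
  induction m as [|m IH]; simpl; intros H Hi; [lia|].
  assert (0 <= fsum m g) by (apply fsum_nonneg; intros; apply H; lia).
  destruct (Nat.eq_dec i m) as [->|Hne]; [lra|].
  pose proof (IH (fun j Hj => H j ltac:(lia)) ltac:(lia)). pose proof (H m ltac:(lia)). lra.
Qed.

Lemma fsum_le_length m1 m2 g :
  (m1 <= m2)%nat -> (forall j, 0 <= g j) -> fsum m1 g <= fsum m2 g.
Proof. intros Hm Hg. induction Hm; [lra|]. simpl. pose proof (Hg m). lra. Qed.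

Ltac fsum_merge :=
  repeat (rewrite <- ?fsum_scal, <- ?fsum_plus, <- ?fsum_minus, <- ?fsum_opp).

Lemma Rle_of_le_plus_small a b c t0 :
  0 < t0 -> (forall t, 0 < t < t0 -> a <= b + t * c) -> a <= b.
Proof.
  intros Ht0 H. destruct (Rle_or_lt a b) as [|Hab]; [assumption|].
  destruct (Rle_or_lt c 0) as [Hc|Hc].
  - specialize (H (t0 / 2) ltac:(lra)). nra.
  - set (t := Rmin (t0 / 2) ((a - b) / (2 * c))).
    assert (Htc : t * c <= (a - b) / 2).
    { replace ((a - b) / 2) with ((a - b) / (2 * c) * c) by (field; lra).
      apply Rmult_le_compat_r; [lra | apply Rmin_r]. }
    assert (Ht : 0 < t < t0).
    { split; [apply Rmin_glb_lt; [lra | apply Rdiv_lt_0_compat; lra]|].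
      pose proof (Rmin_l (t0 / 2) ((a - b) / (2 * c))) as Hmin. fold t in Hmin. lra. }
    specialize (H t Ht). lra.
Qed.

Lemma ip_ext m u u' v v' :
  (forall j, (j < m)%nat -> u j = u' j) -> (forall j, (j < m)%nat -> v j = v' j) ->
  ip m u v = ip m u' v'.
Proof. intros Hu Hv. apply fsum_ext. intros j Hj. rewrite Hu, Hv by auto. reflexivity. Qed.

Lemma ip_nonneg m u : 0 <= ip m u u.
Proof. apply fsum_nonneg. intros. nra. Qed.

Lemma ip_scal_l m c u v : ip m (fun j => c * u j) v = c * ip m u v.
Proof. unfold ip. rewrite <- fsum_scal. apply fsum_ext; intros; ring. Qed.

Lemma ip_scal_r m c u v : ip m u (fun j => c * v j) = c * ip m u v.
Proof. unfold ip. rewrite <- fsum_scal. apply fsum_ext; intros; ring. Qed.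

Lemma ip_sub_self_l m a v : ip m (fun j => a j - a j) v = 0.
Proof. unfold ip. rewrite <- (fsum_zero m). apply fsum_ext; intros; ring. Qed.

Lemma ip_sub_self_r m a v : ip m v (fun j => a j - a j) = 0.
Proof. unfold ip. rewrite <- (fsum_zero m). apply fsum_ext; intros; ring. Qed.

Lemma discriminant_le a b c :
  0 <= c -> (forall s, 0 <= a + 2 * s * b + s * s * c) -> b * b <= a * c.
Proof.
  intros Hc H. destruct (Req_dec c 0) as [Hc0|Hc0].
  - subst c. destruct (Req_dec b 0) as [->|Hb]; [lra|].
    specialize (H (- (a + 1) / (2 * b))).
    replace (2 * (- (a + 1) / (2 * b)) * b) with (- (a + 1)) in H by (field; auto). lra.
  - specialize (H (- (b / c))).
    replace (a + 2 * - (b / c) * b + - (b / c) * - (b / c) * c) with ((a * c - b * b) / c) in H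
      by (field; auto).
    assert (Hprod : 0 <= (a * c - b * b) / c * c) by (apply Rmult_le_pos; lra).
    replace ((a * c - b * b) / c * c) with (a * c - b * b) in Hprod by (field; auto). lra.
Qed.

Lemma ip_cauchy_schwarz m a b : ip m a b <= nrm m a * nrm m b.
Proof.
  assert (Hsq : ip m a b * ip m a b <= ip m a a * ip m b b).
  { apply discriminant_le; [apply ip_nonneg|]. intros s.
    replace (ip m a a + 2 * s * ip m a b + s * s * ip m b b)
      with (ip m (fun j => a j + s * b j) (fun j => a j + s * b j))
      by (unfold ip; fsum_merge; apply fsum_ext; intros; ring).
    apply ip_nonneg. }
  unfold nrm. rewrite <- sqrt_mult by apply ip_nonneg.
  destruct (Rle_or_lt (ip m a b) 0) as [Hle|Hlt].
  - pose proof (sqrt_pos (ip m a a * ip m b b)). lra.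
  - rewrite <- (sqrt_square (ip m a b)) by lra. apply sqrt_le_1_alt. exact Hsq.
Qed.

Lemma nrm_nonneg m a : 0 <= nrm m a.
Proof. apply sqrt_pos. Qed.

Lemma nrm_sq m a : nrm m a * nrm m a = ip m a a.
Proof. apply sqrt_sqrt, ip_nonneg. Qed.

Lemma nrm_scal_abs m t d : nrm m (fun j => t * d j) = Rabs t * nrm m d.
Proof.
  unfold nrm. rewrite ip_scal_l, ip_scal_r, <- Rmult_assoc.
  replace (t * t) with (Rabs t * Rabs t) by (rewrite <- Rabs_mult; apply Rabs_right; nra).
  pose proof (Rabs_pos t).
  rewrite sqrt_mult_alt, sqrt_square by nra. reflexivity.
Qed.

Lemma nrm_scal m t d : 0 <= t -> nrm m (fun j => t * d j) = t * nrm m d.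
Proof. intros Ht. rewrite nrm_scal_abs, Rabs_right by lra. reflexivity. Qed.

(** * Smooth and strongly convex functions *)

Section SmoothFunction.
Variables (m : nat) (h : vec -> R) (g : vec -> vec).
Hypothesis Hg : has_gradient m h g.

Lemma strongly_convex_lower_bound mu u w : strongly_convex m h mu ->
  h u + ip m (g u) (vsub w u) + mu / 2 * ip m (vsub w u) (vsub w u) <= h w.
Proof.
  intros Hsc. set (d := vsub w u). set (D := nrm m d).
  assert (HD : 0 <= D) by apply nrm_nonneg.
  rewrite <- (nrm_sq m d). fold D.
  apply (Rle_of_le_plus_small _ _ (D + 1) 1); [lra|]. intros eps [Heps _].
  destruct (Hg u eps Heps) as [del [Hdel Hnear]].
  apply (Rle_of_le_plus_small _ _ (mu / 2 * (D * D)) (Rmin 1 (del / (D + 1)))).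
  { apply Rmin_glb_lt; [lra|]. apply Rdiv_lt_0_compat; lra. }
  intros t [Ht0 Ht].
  assert (Ht1 : t < 1) by (pose proof (Rmin_l 1 (del / (D + 1))); lra).
  assert (HtD : t * D < del).
  { pose proof (Rmin_r 1 (del / (D + 1))).
    assert (Hlt : t * (D + 1) < del / (D + 1) * (D + 1)) by (apply Rmult_lt_compat_r; lra).
    replace (del / (D + 1) * (D + 1)) with del in Hlt by (field; lra). nra. }
  set (v := vcomb t w u).
  assert (Hvu : vsub v u = fun j => t * d j)
    by (unfold v, vcomb, vsub, d; extensionality j; unfold vsub; ring).
  specialize (Hnear v). rewrite Hvu, nrm_scal, ip_scal_r in Hnear by lra. fold D in Hnear.
  specialize (Hnear HtD).
  pose proof (Rle_abs (- (h v - h u - t * ip m (g u) d))) as Habs.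
  rewrite Rabs_Ropp in Habs.
  pose proof (Hsc w u t ltac:(lra)) as Hconv. fold v d D in Hconv.
  replace (D ^ 2) with (D * D) in Hconv by ring.
  assert (Hdiv : t * (ip m (g u) d - eps * D) <= t * (h w - h u - mu / 2 * (1 - t) * (D * D)))
    by nra.
  apply Rmult_le_reg_l in Hdiv; nra.
Qed.

Lemma has_gradient_derivable_on_line u d s :
  derivable_pt_lim (fun s => h (fun j => u j + s * d j)) s
    (ip m (g (fun j => u j + s * d j)) d).
Proof.
  intros eps Heps. set (p := fun j => u j + s * d j). set (D := nrm m d).
  assert (HD : 0 <= D) by apply nrm_nonneg.
  destruct (Hg p (eps / (2 * (D + 1)))) as [del [Hdel Hnear]];
    [apply Rdiv_lt_0_compat; lra|].
  assert (Hdp : 0 < del / (D + 1)) by (apply Rdiv_lt_0_compat; lra).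
  exists (mkposreal _ Hdp). simpl. intros r Hr0 Hr.
  set (v := fun j => u j + (s + r) * d j).
  assert (Hvp : vsub v p = fun j => r * d j)
    by (unfold v, p, vsub; extensionality j; ring).
  assert (Har : 0 < Rabs r) by (apply Rabs_pos_lt; auto).
  assert (Hlt : Rabs r * D < del).
  { apply (Rmult_lt_compat_r (D + 1)) in Hr; [|lra].
    replace (del / (D + 1) * (D + 1)) with del in Hr by (field; lra). nra. }
  specialize (Hnear v). rewrite Hvp, nrm_scal_abs, ip_scal_r in Hnear. fold D in Hnear.
  specialize (Hnear Hlt).
  replace ((h v - h p) / r - ip m (g p) d) with ((h v - h p - r * ip m (g p) d) / r)
    by (field; auto).
  unfold Rdiv. rewrite Rabs_mult, Rabs_inv.
  apply Rle_lt_trans with (eps / (2 * (D + 1)) * (Rabs r * D) * / Rabs r).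
  { apply Rmult_le_compat_r; [left; apply Rinv_0_lt_compat|]; auto. }
  replace (eps / (2 * (D + 1)) * (Rabs r * D) * / Rabs r) with (eps * (D / (2 * (D + 1))))
    by (field; lra).
  assert (D / (2 * (D + 1)) < 1).
  { apply (Rmult_lt_reg_r (2 * (D + 1))); [lra|].
    replace (D / (2 * (D + 1)) * (2 * (D + 1))) with D by (field; lra). lra. }
  nra.
Qed.

Lemma descent_lemma L u w : lipschitz_grad m g L ->
  h w <= h u + ip m (g u) (vsub w u) + L / 2 * ip m (vsub w u) (vsub w u).
Proof.
  intros HL. set (d := vsub w u). set (D := nrm m d).
  assert (HD : 0 <= D) by apply nrm_nonneg.
  assert (HDD : D * D = ip m d d) by apply nrm_sq.
  set (psi := fun s => h (fun j => u j + s * d j) - s * ip m (g u) d - L / 2 * (s * s) * ip m d d).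
  set (psi' := fun s => ip m (g (fun j => u j + s * d j)) d - ip m (g u) d - L * s * ip m d d).
  assert (Hderiv : forall c, 0 <= c <= 1 -> derivable_pt_lim psi c (psi' c)).
  { intros c _. unfold psi, psi'.
    pose proof (has_gradient_derivable_on_line u d c) as H1.
    pose proof (derivable_pt_lim_scal id (ip m (g u) d) c 1 (derivable_pt_lim_id c)) as H2.
    pose proof (derivable_pt_lim_scal Rsqr (L / 2 * ip m d d) c (2 * c)
                  (derivable_pt_lim_Rsqr c)) as H3.
    pose proof (derivable_pt_lim_minus _ _ _ _ _ (derivable_pt_lim_minus _ _ _ _ _ H1 H2) H3) as H4.
    replace (fun s => h (fun j => u j + s * d j) - s * ip m (g u) d - L / 2 * (s * s) * ip m d d)
      with ((fun s => h (fun j => (u j + s * d j)%R)) - mult_real_fct (ip m (g u) d) id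
            - mult_real_fct (L / 2 * ip m d d) Rsqr)%F
      by (extensionality s; unfold minus_fct, mult_real_fct, id, Rsqr; ring).
    replace (ip m (g (fun j => u j + c * d j)) d - ip m (g u) d - L * c * ip m d d)
      with (ip m (g (fun j => u j + c * d j)) d - ip m (g u) d * 1
            - L / 2 * ip m d d * (2 * c)) by field.
    exact H4. }
  destruct (MVT_cor2 psi psi' 0 1 ltac:(lra) Hderiv) as [c [Hmvt Hc]].
  (* mean value theorem for psi; psi' <= 0 by the Lipschitz bound and Cauchy-Schwarz *)
  assert (Hpsi' : psi' c <= 0).
  { unfold psi'. set (q := fun j => u j + c * d j).
    pose proof (ip_cauchy_schwarz m (vsub (g q) (g u)) d) as Hcs. fold D in Hcs.
    replace (ip m (vsub (g q) (g u)) d) with (ip m (g q) d - ip m (g u) d) in Hcs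
      by (unfold ip, vsub; rewrite <- fsum_minus; apply fsum_ext; intros; ring).
    pose proof (HL q u) as Hl.
    replace (vsub q u) with (fun j => c * d j) in Hl by (unfold q, vsub; extensionality j; ring).
    rewrite nrm_scal in Hl by lra. fold D in Hl.
    assert (nrm m (vsub (g q) (g u)) * D <= L * (c * D) * D)
      by (apply Rmult_le_compat_r; auto).
    rewrite <- HDD. nra. }
  unfold psi in Hmvt.
  replace (fun j => u j + 1 * d j) with w in Hmvt by (unfold d, vsub; extensionality j; ring).
  replace (fun j => u j + 0 * d j) with u in Hmvt by (extensionality j; ring).
  fold d. nra.
Qed.

Lemma strong_convexity_le_lipschitz mu L :
  (1 <= m)%nat -> strongly_convex m h mu -> lipschitz_grad m g L -> mu <= L.
Proof.
  intros Hm Hsc HL.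
  set (u := fun _ : nat => 0). set (w := fun j : nat => if Nat.eqb j 0 then 1 else 0).
  pose proof (strongly_convex_lower_bound mu u w Hsc).
  pose proof (descent_lemma L u w HL).
  assert (1 <= ip m (vsub w u) (vsub w u)).
  { pose proof (fsum_term_le m (fun j => vsub w u j * vsub w u j) 0 ltac:(intros; nra) ltac:(lia))
      as Hterm.
    cbv beta in Hterm.
    replace (vsub w u 0%nat) with 1 in Hterm by (unfold vsub, w, u; simpl; ring).
    unfold ip. lra. }
  nra.
Qed.

Lemma gradient_step_contraction mu L al u v :
  strongly_convex m h mu -> lipschitz_grad m g L ->
  0 < al -> al * L < 1 -> 0 <= mu -> mu <= L ->
  ip m (fun j => (u j - al * g u j) - (v j - al * g v j))
       (fun j => (u j - al * g u j) - (v j - al * g v j))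
  <= (1 - al * mu) ^ 2 * ip m (vsub u v) (vsub u v).
Proof.
  intros Hsc HL Hal HaL Hmu HmL.
  set (t := al / (2 * (1 - al * mu))).
  assert (Ht : 0 < t) by (apply Rdiv_lt_0_compat; nra).
  set (Dh := fun j => (g u j - mu * u j) - (g v j - mu * v j)).
  set (y := fun j => v j + t * Dh j).
  set (y' := fun j => u j - t * Dh j).
  (* The bounds at the cross points y, y' add up to the co-coercivity of g - mu id. *)
  pose proof (strongly_convex_lower_bound mu u y Hsc).
  pose proof (descent_lemma L v y HL).
  pose proof (strongly_convex_lower_bound mu v y' Hsc).
  pose proof (descent_lemma L u y' HL).
  set (S := ip m (g u) (vsub y u) + mu / 2 * ip m (vsub y u) (vsub y u) - ip m (g v) (vsub y v)
     - L / 2 * ip m (vsub y v) (vsub y v) + ip m (g v) (vsub y' v)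
     + mu / 2 * ip m (vsub y' v) (vsub y' v)
     - ip m (g u) (vsub y' u) - L / 2 * ip m (vsub y' u) (vsub y' u)).
  assert (HS : S <= 0) by (unfold S; lra).
  set (s := 2 * t - (L - mu) * t * t).
  assert (Hid : ip m (fun j => (u j - al * g u j) - (v j - al * g v j))
                     (fun j => (u j - al * g u j) - (v j - al * g v j))
     - (1 - al * mu) ^ 2 * ip m (vsub u v) (vsub u v)
     = 2 * al * (1 - al * mu) * S + (al * al - 2 * al * (1 - al * mu) * s) * ip m Dh Dh).
  { unfold S, s, ip. fsum_merge. apply fsum_ext. intros j Hj.
    unfold y, y', Dh, vsub, t. field. nra. }
  assert (Hcoef : al * al - 2 * al * (1 - al * mu) * s = al * al * ((L - mu) * t - 1))
    by (unfold s, t; field; nra).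
  assert ((L - mu) * t <= 1).
  { unfold t. apply (Rmult_le_reg_r (2 * (1 - al * mu))); [nra|].
    replace ((L - mu) * (al / (2 * (1 - al * mu))) * (2 * (1 - al * mu)))
      with ((L - mu) * al) by (field; nra). nra. }
  pose proof (ip_nonneg m Dh).
  assert (2 * al * (1 - al * mu) * S <= 0) by (assert (0 <= 2 * al * (1 - al * mu)) by nra; nra).
  assert (al * al * ((L - mu) * t - 1) * ip m Dh Dh <= 0)
    by (assert (0 < al * al) by nra; assert (al * al * ((L - mu) * t - 1) <= 0) by nra; nra).
  rewrite Hcoef in Hid. lra.
Qed.
End SmoothFunction.

Lemma Rle_of_scaled_nonneg k a b : 0 < k -> 0 <= k * (b - a) -> a <= b.
Proof. intros Hk H. apply Rmult_le_reg_l with k; nra. Qed.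

(* One coordinate of the error bound, with [k = 1 / delta] *)
Lemma error_bound_coord gm mu' k a zz s g : 0 < gm -> 0 < mu' -> 1 <= k * gm * mu' ->
  g * (zz - a) + 1 / 2 * (/ gm * ((zz - a) * (zz - a)))
  + / gm * ((zz - (a - gm * g)) * (s - zz)) - g * (s - a) - 1 / 2 * (mu' * ((s - a) * (s - a)))
  <= (k - 1) / 2 * (/ gm * ((a - zz) * (a - zz))).
Proof.
  intros Hg Hm Hk.
  assert (Hk0 : 0 < k).
  { destruct (Rle_or_lt k 0) as [Hk0|]; [|auto]. assert (0 < gm * mu') by nra. nra. }
  apply (Rle_of_scaled_nonneg (2 * gm * k)); [nra|].
  replace (2 * gm * k * ((k - 1) / 2 * (/ gm * ((a - zz) * (a - zz)))
     - (g * (zz - a) + 1 / 2 * (/ gm * ((zz - a) * (zz - a)))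
        + / gm * ((zz - (a - gm * g)) * (s - zz)) - g * (s - a)
        - 1 / 2 * (mu' * ((s - a) * (s - a))))))
    with ((k * (a - zz) + (s - a)) * (k * (a - zz) + (s - a))
          + (k * gm * mu' - 1) * ((s - a) * (s - a))) by (field; lra).
  assert (0 <= (k * gm * mu' - 1) * ((s - a) * (s - a))).
  { apply Rmult_le_pos; [lra | apply Rle_0_sqr]. }
  pose proof (Rle_0_sqr (k * (a - zz) + (s - a))). unfold Rsqr in *. lra.
Qed.

Lemma sq_add_le_weighted th c a b : 0 < th -> 0 <= c ->
  c * ((a + b) * (a + b)) <= (1 + th) * (c * (a * a)) + (1 + / th) * (c * (b * b)).
Proof.
  intros Ht Hc. apply (Rle_of_scaled_nonneg th); [exact Ht|].
  replace (th * ((1 + th) * (c * (a * a)) + (1 + / th) * (c * (b * b)) - c * ((a + b) * (a + b))))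
    with (c * ((th * a - b) * (th * a - b))) by (field; lra).
  apply Rmult_le_pos; [exact Hc | apply Rle_0_sqr].
Qed.

Lemma contraction_factor_le del Dl K K' A :
  0 < del < 1 -> Dl < 1 -> 0 < K -> K <= K' -> 0 <= A ->
  (1 - del * (1 - Dl) / (K * (1 - del))) * A <= (1 - del * (1 - Dl) / (K' * (1 - del))) * A.
Proof.
  intros Hd HDl HK HK' HA. apply Rmult_le_compat_r; auto.
  assert (del * (1 - Dl) / (K' * (1 - del)) <= del * (1 - Dl) / (K * (1 - del))).
  { unfold Rdiv. apply Rmult_le_compat_l; [nra|]. apply Rinv_le_contravar; nra. }
  lra.
Qed.

Lemma window_constant_pos th del beta : 0 < th -> 0 <= beta ->
  0 < (1 + th) + (1 + / th) * (1 - del) ^ 2 * beta.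
Proof.
  intros Hth Hb. assert (0 < / th) by (apply Rinv_0_lt_compat; auto).
  assert (0 <= (1 + / th) * (1 - del) ^ 2 * beta)
    by (apply Rmult_le_pos; [apply Rmult_le_pos; [lra | apply pow2_ge_0] | auto]).
  lra.
Qed.

Lemma contraction_factor_nonneg del Dl K : 0 < del < 1 -> del <= Dl -> 1 <= K ->
  0 <= 1 - del * (1 - Dl) / (K * (1 - del)).
Proof.
  intros Hd HdD HK.
  enough (del * (1 - Dl) / (K * (1 - del)) <= 1) by lra.
  apply (Rmult_le_reg_r (K * (1 - del))); [nra|].
  replace (del * (1 - Dl) / (K * (1 - del)) * (K * (1 - del))) with (del * (1 - Dl)) by (field; nra).
  nra.
Qed.

Lemma bmin_le m g i : (i <= m)%nat -> bmin m g <= g i.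
Proof.
  induction m as [|m IH]; simpl; intros Hi.
  - replace i with 0%nat by lia. lra.
  - destruct (Nat.eq_dec i (S m)) as [->|Hne]; [apply Rmin_r|].
    eapply Rle_trans; [apply Rmin_l | apply IH; lia].
Qed.

Lemma bmin_pos m g : (forall i, (i <= m)%nat -> 0 < g i) -> 0 < bmin m g.
Proof.
  induction m as [|m IH]; simpl; intros H; [apply H; lia|].
  apply Rmin_glb_lt; [apply IH; intros; apply H | apply H]; lia.
Qed.

Lemma bmax_ge m g i : (i <= m)%nat -> g i <= bmax m g.
Proof.
  induction m as [|m IH]; simpl; intros Hi.
  - replace i with 0%nat by lia. lra.
  - destruct (Nat.eq_dec i (S m)) as [->|Hne]; [apply Rmax_r|].
    eapply Rle_trans; [apply IH; lia | apply Rmax_l].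
Qed.

Lemma bmax_lt m g c : (forall i, (i <= m)%nat -> g i < c) -> bmax m g < c.
Proof.
  induction m as [|m IH]; simpl; intros H; [apply H; lia|].
  apply Rmax_lub_lt; [apply IH; intros; apply H | apply H]; lia.
Qed.

(* the value of a finite extended real; junk value 0 at +oo and -oo *)
Definition ER_val (e : ER) : R := match e with fin r => r | _ => 0 end.

Lemma ER_le_antisym a b : ER_le a b -> ER_le b a -> a = b.
Proof. destruct a, b; simpl; intros; try tauto; f_equal; lra. Qed.

Lemma ER_inf_attained (S : ER -> Prop) v : S v -> (forall u, S u -> ER_le v u) -> ER_inf S = v.
Proof.
  intros Hv Hmin.
  assert (Hglb : is_glb S v) by (split; auto; intros y' Hy'; apply Hy'; auto).
  destruct (epsilon_spec (inhabits ninf) (is_glb S) (ex_intro _ v Hglb)) as [Hlow Hgreat].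
  apply ER_le_antisym; [apply Hlow | apply Hgreat]; auto.
Qed.

Lemma first_true (P : nat -> bool) t : P t = true ->
  exists t', (t' <= t)%nat /\ P t' = true /\ forall s, (s < t')%nat -> P s = false.
Proof.
  induction t as [t IH] using (well_founded_induction lt_wf). intros Ht.
  destruct (classic (exists s, (s < t)%nat /\ P s = true)) as [[s [Hs Ps]]|Hno].
  - destruct (IH s Hs Ps) as [t' [Ht' [HPt' Hfirst]]]. exists t'. repeat split; auto; lia.
  - exists t. repeat split; auto. intros s Hs.
    destruct (P s) eqn:E; auto. elim Hno. eauto.
Qed.

(** * The forward-backward envelope along algorithm BC *)

Section Problem.
Variables (N : nat) (n : nat -> nat) (f : nat -> vec -> R) (grad : nat -> vec -> vec)
  (L mu : nat -> R) (G : bvec -> ER) (gamma : nat -> R).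
Hypothesis HN : (1 <= N)%nat.
Hypothesis Hgrad : forall i, (i < N)%nat -> has_gradient (n i) (f i) (grad i).
Hypothesis HL : forall i, (i < N)%nat -> 0 <= L i /\ lipschitz_grad (n i) (grad i) (L i).
Hypothesis Hmu : forall i, (i < N)%nat -> 0 < mu i /\ strongly_convex (n i) (f i) (mu i).
Hypothesis HGp : proper G.
Hypothesis HGcvx : convexG G.
Hypothesis Hgamma : forall i, (i < N)%nat -> 0 < gamma i /\ gamma i * L i < INR N.

Lemma INR_N_pos : 0 < INR N.
Proof. apply lt_0_INR. lia. Qed.

Lemma inv_gamma_pos i : (i < N)%nat -> 0 < / gamma i.
Proof. intros Hi. apply Rinv_0_lt_compat, Hgamma, Hi. Qed.

Definition qnorm (a : bvec) : R := wbnsq N n (fun i => / gamma i) a.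
Definition qip (a b : bvec) : R := fsum N (fun i => / gamma i * ip (n i) (a i) (b i)).

Lemma qnorm_expand a b t :
  qnorm (fun i j => a i j + t * b i j) = qnorm a + 2 * t * qip a b + t * t * qnorm b.
Proof.
  unfold qnorm, wbnsq, qip. fsum_merge. apply fsum_ext; intros i Hi.
  unfold ip. fsum_merge. apply fsum_ext; intros; ring.
Qed.

Lemma qnorm_block_le a i : (i < N)%nat -> / gamma i * ip (n i) (a i) (a i) <= qnorm a.
Proof.
  intros Hi. apply (fsum_term_le N (fun i => / gamma i * ip (n i) (a i) (a i))); auto.
  intros j Hj. apply Rmult_le_pos; [left; apply inv_gamma_pos; auto | apply ip_nonneg].
Qed.

Lemma qnorm_nonneg a : 0 <= qnorm a.
Proof.
  apply fsum_nonneg. intros i Hi.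
  apply Rmult_le_pos; [left; apply inv_gamma_pos; auto | apply ip_nonneg].
Qed.

Lemma qnorm_sub_self a : qnorm (bsub a a) = 0.
Proof.
  unfold qnorm, wbnsq. rewrite <- (fsum_zero N). apply fsum_ext. intros i Hi.
  unfold bsub. rewrite ip_sub_self_l. ring.
Qed.

Lemma qnorm_add_le a b th : 0 < th ->
  qnorm (fun i j => a i j + b i j) <= (1 + th) * qnorm a + (1 + / th) * qnorm b.
Proof.
  intros Ht. unfold qnorm, wbnsq. fsum_merge. apply fsum_le. intros i Hi.
  pose proof (inv_gamma_pos i Hi).
  unfold ip. fsum_merge. apply fsum_le. intros j Hj. apply sq_add_le_weighted; auto; lra.
Qed.

Lemma in_T_G_fin x z : in_T N n grad G gamma x z -> G z = fin (ER_val (G z)).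
Proof.
  intros HT. destruct HGp as [Hninf [w0 Hw0]]. specialize (HT w0). specialize (Hninf z).
  unfold prox_obj in HT. destruct (G z); simpl in *; [tauto | reflexivity |].
  destruct (G w0); simpl in HT; tauto.
Qed.

(* Comparing the prox objective at z and at the convex combination of z and w. *)
Lemma prox_variational_ineq x z w gz gw : in_T N n grad G gamma x z ->
  G z = fin gz -> G w = fin gw -> gz <= gw + qip (bsub z (fb_step N grad gamma x)) (bsub w z).
Proof.
  intros HT Hz Hw. set (p := fb_step N grad gamma x).
  apply (Rle_of_le_plus_small _ _ (qnorm (bsub w z) / 2) 1); [lra|]. intros t Ht.
  set (c := bcomb t w z).
  pose proof (HGcvx w z gw gz t Hw Hz Ht) as Hc. fold c in Hc.
  destruct HGp as [Hn _].
  destruct (G c) as [| gc |] eqn:HGc; [elim (Hn c); auto | | simpl in Hc; tauto]. simpl in Hc.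
  specialize (HT c). unfold prox_obj in HT. rewrite Hz, HGc in HT. simpl in HT. fold p in HT.
  replace (bsub c p) with (fun i j => bsub z p i j + t * bsub w z i j) in HT
    by (unfold c, bcomb, bsub; extensionality i; extensionality j; ring).
  fold (qnorm (fun i j => bsub z p i j + t * bsub w z i j)) (qnorm (bsub z p)) in HT.
  rewrite qnorm_expand in HT.
  pose proof (qnorm_nonneg (bsub w z)).
  apply Rmult_le_reg_l with t; [lra|]. nra.
Qed.

Lemma ip_gradF u i d : ip (n i) (gradF N grad u i) d = / INR N * ip (n i) (grad i (u i)) d.
Proof. unfold gradF. apply ip_scal_l. Qed.

Lemma Fsm_descent u w : Fsm N f w <= Fsm N f u + bip N n (gradF N grad u) (bsub w u)
   + 1 / 2 * fsum N (fun i => L i / INR N * ip (n i) (bsub w u i) (bsub w u i)).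
Proof.
  pose proof INR_N_pos. assert (0 < / INR N) by (apply Rinv_0_lt_compat; auto).
  unfold Fsm, bip. fsum_merge. apply fsum_le. intros i Hi. rewrite ip_gradF.
  pose proof (descent_lemma (n i) (f i) (grad i) (Hgrad i Hi) (L i) (u i) (w i)
                (proj2 (HL i Hi))) as Hdesc.
  change (vsub (w i) (u i)) with (bsub w u i) in Hdesc. unfold Rdiv. nra.
Qed.

Lemma Fsm_strong_convexity u w : Fsm N f u + bip N n (gradF N grad u) (bsub w u)
   + 1 / 2 * fsum N (fun i => mu i / INR N * ip (n i) (bsub w u i) (bsub w u i)) <= Fsm N f w.
Proof.
  pose proof INR_N_pos. assert (0 < / INR N) by (apply Rinv_0_lt_compat; auto).
  unfold Fsm, bip. fsum_merge. apply fsum_le. intros i Hi. rewrite ip_gradF.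
  pose proof (strongly_convex_lower_bound (n i) (f i) (grad i) (Hgrad i Hi) (mu i) (u i) (w i)
                (proj2 (Hmu i Hi))) as Hsc.
  change (vsub (w i) (u i)) with (bsub w u i) in Hsc. unfold Rdiv. nra.
Qed.

Definition fb_model (x w : bvec) : R :=
  Fsm N f x + bip N n (gradF N grad x) (bsub w x) + 1 / 2 * qnorm (bsub w x).

Lemma fb_model_self x : fb_model x x = Fsm N f x.
Proof.
  unfold fb_model, bip. rewrite qnorm_sub_self.
  rewrite (fsum_ext N _ (fun _ => 0)) by (intros; apply ip_sub_self_r).
  rewrite fsum_zero. ring.
Qed.

Lemma fb_model_prox_form x w : fb_model x w = 1 / 2 * qnorm (bsub w (fb_step N grad gamma x))
  + (Fsm N f x - 1 / 2 * fsum N (fun i => gamma i * ip (n i) (gradF N grad x i) (gradF N grad x i))).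
Proof.
  enough (bip N n (gradF N grad x) (bsub w x) + 1 / 2 * qnorm (bsub w x)
     = 1 / 2 * qnorm (bsub w (fb_step N grad gamma x))
       - 1 / 2 * fsum N (fun i => gamma i * ip (n i) (gradF N grad x i) (gradF N grad x i)))
    by (unfold fb_model; lra).
  unfold qnorm, wbnsq, bip, fb_step. fsum_merge. apply fsum_ext. intros i Hi.
  destruct (Hgamma i Hi) as [Hg _].
  unfold ip, bsub. fsum_merge. apply fsum_ext; intros j Hj. field. lra.
Qed.

(* the value of FBE at x, computed from any z in T(x) *)
Definition envelope (x z : bvec) : R := fb_model x z + ER_val (G z).

Lemma envelope_le_fb_model x z w gw : in_T N n grad G gamma x z -> G w = fin gw ->
  envelope x z <= fb_model x w + gw.
Proof.
  intros HT Hw. pose proof (in_T_G_fin x z HT) as Hz.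
  specialize (HT w). unfold prox_obj in HT. rewrite Hz, Hw in HT. simpl in HT.
  unfold envelope. rewrite !fb_model_prox_form. unfold qnorm. lra.
Qed.

Lemma FBE_eq_envelope x z : in_T N n grad G gamma x z -> FBE N n f grad G gamma x = fin (envelope x z).
Proof.
  intros HT. apply ER_inf_attained.
  - exists z. rewrite (in_T_G_fin x z HT). reflexivity.
  - intros u [w ->]. destruct HGp as [Hn _].
    destruct (G w) as [| gw |] eqn:Hw; simpl; auto; [elim (Hn w); auto|].
    pose proof (envelope_le_fb_model x z w gw HT Hw) as Hle. unfold fb_model, qnorm in Hle. lra.
Qed.

Lemma Phi_le_envelope x z : in_T N n grad G gamma x z -> Fsm N f z + ER_val (G z) <= envelope x z.
Proof.
  intros HT. pose proof (Fsm_descent x z) as Hdesc.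
  enough (fsum N (fun i => L i / INR N * ip (n i) (bsub z x i) (bsub z x i)) <= qnorm (bsub z x))
    by (unfold envelope, fb_model; lra).
  apply fsum_le. intros i Hi. destruct (Hgamma i Hi) as [Hg HgL].
  pose proof (ip_nonneg (n i) (bsub z x i)). pose proof INR_N_pos.
  apply Rmult_le_compat_r; auto.
  apply Rmult_le_reg_r with (INR N * gamma i); [nra|].
  replace (L i / INR N * (INR N * gamma i)) with (gamma i * L i) by (field; lra).
  replace (/ gamma i * (INR N * gamma i)) with (INR N) by (field; lra). lra.
Qed.

Lemma min_le_envelope x z xs m : in_T N n grad G gamma x z ->
  is_minimizer N f G xs -> Phi N f G xs = fin m -> m <= envelope x z.
Proof.
  intros HT Hmin Hxs. pose proof (Hmin z) as Hz. rewrite Hxs in Hz. unfold Phi in Hz.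
  rewrite (in_T_G_fin x z HT) in Hz. simpl in Hz. pose proof (Phi_le_envelope x z HT). lra.
Qed.

Lemma envelope_error_bound x z xs m del : in_T N n grad G gamma x z -> Phi N f G xs = fin m ->
  0 < del -> (forall i, (i < N)%nat -> del <= gamma i * mu i / INR N) ->
  envelope x z - m <= (/ del - 1) / 2 * qnorm (bsub x z).
Proof.
  intros HT Hxs Hd Hdi.
  unfold Phi in Hxs. destruct (G xs) as [| gs |] eqn:Hgs; simpl in Hxs; try discriminate.
  injection Hxs as Hm.
  pose proof (prox_variational_ineq x z xs _ gs HT (in_T_G_fin x z HT) Hgs).
  pose proof (Fsm_strong_convexity x xs).
  enough (bip N n (gradF N grad x) (bsub z x) + 1 / 2 * qnorm (bsub z x)
     + qip (bsub z (fb_step N grad gamma x)) (bsub xs z) - bip N n (gradF N grad x) (bsub xs x)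
     - 1 / 2 * fsum N (fun i => mu i / INR N * ip (n i) (bsub xs x i) (bsub xs x i))
     <= (/ del - 1) / 2 * qnorm (bsub x z)) by (unfold envelope, fb_model; lra).
  unfold bip, qip, qnorm, wbnsq. fsum_merge. apply fsum_le. intros i Hi.
  destruct (Hgamma i Hi) as [Hg _]. destruct (Hmu i Hi) as [Hm0 _]. pose proof INR_N_pos.
  pose proof (Hdi i Hi).
  unfold ip, bsub, fb_step. fsum_merge. apply fsum_le. intros j Hj.
  apply (error_bound_coord (gamma i) (mu i / INR N) (/ del)); auto.
  - apply Rdiv_lt_0_compat; auto.
  - apply Rmult_le_reg_l with del; auto.
    replace (del * (/ del * gamma i * (mu i / INR N))) with (gamma i * mu i / INR N)
      by (field; lra). lra.
Qed.

Lemma prox_nonexpansive xa za xb zb :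
  in_T N n grad G gamma xa za -> in_T N n grad G gamma xb zb ->
  qnorm (bsub za zb) <= qnorm (bsub (fb_step N grad gamma xa) (fb_step N grad gamma xb)).
Proof.
  intros Ha Hb.
  pose proof (in_T_G_fin xa za Ha) as Hza. pose proof (in_T_G_fin xb zb Hb) as Hzb.
  pose proof (prox_variational_ineq xa za zb _ _ Ha Hza Hzb).
  pose proof (prox_variational_ineq xb zb za _ _ Hb Hzb Hza).
  set (pa := fb_step N grad gamma xa) in *. set (pb := fb_step N grad gamma xb) in *.
  assert (2 * (qip (bsub za pa) (bsub zb za) + qip (bsub zb pb) (bsub za zb))
     + qnorm (fun i j => (pa i j - pb i j) - (za i j - zb i j))
     = qnorm (bsub pa pb) - qnorm (bsub za zb)).
  { unfold qip, qnorm, wbnsq. fsum_merge. apply fsum_ext. intros i Hi.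
    unfold ip, bsub. fsum_merge. apply fsum_ext; intros; ring. }
  pose proof (qnorm_nonneg (fun i j => (pa i j - pb i j) - (za i j - zb i j))). lra.
Qed.

Lemma fb_step_contraction xa xb del : 0 <= del ->
  (forall i, (i < N)%nat -> del <= gamma i * mu i / INR N) ->
  qnorm (bsub (fb_step N grad gamma xa) (fb_step N grad gamma xb))
  <= (1 - del) ^ 2 * qnorm (bsub xa xb).
Proof.
  intros Hd Hdi. unfold qnorm, wbnsq. rewrite <- fsum_scal. apply fsum_le. intros i Hi.
  destruct (Hgamma i Hi) as [Hg HgL]. destruct (Hmu i Hi) as [Hm0 Hsc].
  destruct (HL i Hi) as [HL0 HLi]. pose proof INR_N_pos. pose proof (Hdi i Hi).
  pose proof (inv_gamma_pos i Hi).
  destruct (Nat.eq_dec (n i) 0) as [Hni|Hni]; [unfold ip; rewrite Hni; simpl; lra|].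
  pose proof (strong_convexity_le_lipschitz (n i) (f i) (grad i) (Hgrad i Hi) (mu i) (L i)
                ltac:(lia) Hsc HLi) as HmL.
  set (al := gamma i / INR N).
  assert (Hal : 0 < al) by (apply Rdiv_lt_0_compat; auto).
  assert (HaL : al * L i < 1).
  { apply Rmult_lt_reg_r with (INR N); auto.
    replace (al * L i * INR N) with (gamma i * L i) by (unfold al; field; lra). lra. }
  assert (Hdel : del <= al * mu i).
  { replace (al * mu i) with (gamma i * mu i / INR N) by (unfold al; field; lra). lra. }
  replace (ip (n i) (bsub (fb_step N grad gamma xa) (fb_step N grad gamma xb) i)
                    (bsub (fb_step N grad gamma xa) (fb_step N grad gamma xb) i))
    with (ip (n i) (fun j => (xa i j - al * grad i (xa i) j) - (xb i j - al * grad i (xb i) j))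
                   (fun j => (xa i j - al * grad i (xa i) j) - (xb i j - al * grad i (xb i) j)))
    by (apply ip_ext; intros; unfold bsub, fb_step, gradF, al; field; lra).
  pose proof (gradient_step_contraction (n i) (f i) (grad i) (Hgrad i Hi) (mu i) (L i) al
                (xa i) (xb i) Hsc HLi Hal HaL ltac:(lra) HmL) as Hcontr.
  change (bsub xa xb i) with (vsub (xa i) (xb i)).
  pose proof (ip_nonneg (n i) (vsub (xa i) (xb i))).
  assert ((1 - al * mu i) ^ 2 <= (1 - del) ^ 2).
  { assert (al * mu i <= 1) by nra. simpl. nra. }
  assert ((1 - al * mu i) ^ 2 * ip (n i) (vsub (xa i) (xb i)) (vsub (xa i) (xb i))
          <= (1 - del) ^ 2 * ip (n i) (vsub (xa i) (xb i)) (vsub (xa i) (xb i)))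
    by (apply Rmult_le_compat_r; auto).
  nra.
Qed.

Lemma in_T_contraction xa za xb zb del :
  in_T N n grad G gamma xa za -> in_T N n grad G gamma xb zb ->
  0 <= del -> (forall i, (i < N)%nat -> del <= gamma i * mu i / INR N) ->
  qnorm (bsub za zb) <= (1 - del) ^ 2 * qnorm (bsub xa xb).
Proof.
  intros Ha Hb Hd Hdi. eapply Rle_trans;
    [apply (prox_nonexpansive xa za xb zb Ha Hb) | apply fb_step_contraction; auto].
Qed.

Lemma fb_model_block_update x z x' Dl :
  (forall i, (i < N)%nat -> x' i = z i \/ x' i = x i) ->
  (forall i, (i < N)%nat -> gamma i * L i / INR N <= Dl) ->
  fb_model x' z <= fb_model x z - (1 - Dl) / 2 * qnorm (bsub x' x).
Proof.
  intros Hx' HDl. unfold fb_model, Fsm, bip, qnorm, wbnsq. fsum_merge. apply fsum_le. intros i Hi.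
  pose proof INR_N_pos. destruct (Hgamma i Hi) as [Hg _]. pose proof (HDl i Hi).
  unfold bsub, gradF. rewrite !ip_scal_l.
  destruct (Hx' i Hi) as [Hu | Hu]; rewrite Hu, ?ip_sub_self_l, ?ip_sub_self_r; [|lra].
  pose proof (descent_lemma (n i) (f i) (grad i) (Hgrad i Hi) (L i) (x i) (z i) (proj2 (HL i Hi)))
    as Hdesc. unfold vsub in Hdesc.
  set (D := ip (n i) (fun j => z i j - x i j) (fun j => z i j - x i j)) in *.
  set (C := ip (n i) (grad i (x i)) (fun j => z i j - x i j)) in *.
  assert (0 <= D) by apply ip_nonneg.
  assert (Hcoef : L i / INR N * D <= Dl / gamma i * D).
  { apply Rmult_le_compat_r; auto.
    apply Rmult_le_reg_r with (INR N * gamma i); [nra|].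
    replace (L i / INR N * (INR N * gamma i)) with (gamma i * L i / INR N * INR N) by (field; lra).
    replace (Dl / gamma i * (INR N * gamma i)) with (Dl * INR N) by (field; lra).
    apply Rmult_le_compat_r; lra. }
  assert (/ INR N * f i (z i) <= / INR N * (f i (x i) + C + L i / 2 * D))
    by (apply Rmult_le_compat_l; [left; apply Rinv_0_lt_compat|]; auto).
  unfold Rdiv in *. nra.
Qed.

Lemma envelope_decrease I x z k Dl : algorithm_BC N n grad G gamma I x z ->
  (forall i, (i < N)%nat -> gamma i * L i / INR N <= Dl) ->
  envelope (x (S k)) (z (S k)) <= envelope (x k) (z k) - (1 - Dl) / 2 * qnorm (bsub (x (S k)) (x k)).
Proof.
  intros [_ [HT Hupd]] HDl.
  pose proof (envelope_le_fb_model (x (S k)) (z (S k)) (z k) _ (HT (S k)) (in_T_G_fin _ _ (HT k))).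
  enough (fb_model (x (S k)) (z k) <= fb_model (x k) (z k) - (1 - Dl) / 2 * qnorm (bsub (x (S k)) (x k)))
    by (unfold envelope at 2; lra).
  apply fb_model_block_update; auto.
  intros i Hi. rewrite Hupd. destruct (I (S k) i); auto.
Qed.

Definition step_len (x : nat -> bvec) (k : nat) : R := qnorm (bsub (x (S k)) (x k)).
Definition window_len (x : nat -> bvec) (k0 P : nat) : R := fsum P (fun j => step_len x (k0 + j)).

Definition window_covers (I : nat -> nat -> bool) (x : nat -> bvec) (k0 P : nat) : Prop :=
  forall i, (i < N)%nat ->
    exists t, (t < P)%nat /\ I (S (k0 + t)) i = true /\ x (k0 + t)%nat i = x k0 i.

Lemma window_len_nonneg x k0 P : 0 <= window_len x k0 P.
Proof. apply fsum_nonneg. intros; apply qnorm_nonneg. Qed.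

Lemma step_len_le_window x k0 P t : (t < P)%nat -> step_len x (k0 + t) <= window_len x k0 P.
Proof.
  intros Ht. apply (fsum_term_le P (fun j => step_len x (k0 + j))); auto.
  intros; apply qnorm_nonneg.
Qed.

Lemma window_len_le_length x k0 P P' : (P <= P')%nat -> window_len x k0 P <= window_len x k0 P'.
Proof. intros HP. apply fsum_le_length; auto. intros; apply qnorm_nonneg. Qed.

Lemma envelope_window_decrease I x z Dl k0 P : algorithm_BC N n grad G gamma I x z ->
  (forall i, (i < N)%nat -> gamma i * L i / INR N <= Dl) ->
  envelope (x (k0 + P)%nat) (z (k0 + P)%nat)
  <= envelope (x k0) (z k0) - (1 - Dl) / 2 * window_len x k0 P.
Proof.
  intros Halg HDl. induction P as [|P IH].
  - rewrite Nat.add_0_r. unfold window_len. simpl. lra.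
  - rewrite Nat.add_succ_r. pose proof (envelope_decrease I x z (k0 + P) Dl Halg HDl).
    unfold window_len in *. simpl fsum. unfold step_len at 2. lra.
Qed.

(* Block i of x^k0 - z^k0 splits as (x^k - z^k) + (z^k - z^k0), k being the first update of
   block i in the window: the first part is a step of the algorithm, the second is controlled by
   the contraction of T. *)
Lemma residual_window_bound I x z k0 P del beta th :
  algorithm_BC N n grad G gamma I x z -> 0 <= del ->
  (forall i, (i < N)%nat -> del <= gamma i * mu i / INR N) -> 0 < th ->
  window_covers I x k0 P ->
  (forall t, (t < P)%nat -> qnorm (bsub (x (k0 + t)%nat) (x k0)) <= beta * window_len x k0 P) ->
  qnorm (bsub (x k0) (z k0))
  <= INR N * ((1 + th) * window_len x k0 P + (1 + / th) * ((1 - del) ^ 2 * (beta * window_len x k0 P))).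
Proof.
  intros [_ [HT Hupd]] Hd Hdi Hth Hcov Hdrift.
  set (W := window_len x k0 P).
  unfold qnorm at 1. unfold wbnsq. rewrite <- fsum_const. apply fsum_le. intros i Hi.
  destruct (Hcov i Hi) as [t [Ht [HI Hx]]]. set (k := (k0 + t)%nat) in *.
  pose proof (inv_gamma_pos i Hi).
  set (d := fun j => x k i j - z k i j). set (e := fun j => z k i j - z k0 i j).
  assert (Hsplit : / gamma i * ip (n i) (bsub (x k0) (z k0) i) (bsub (x k0) (z k0) i)
             <= (1 + th) * (/ gamma i * ip (n i) d d) + (1 + / th) * (/ gamma i * ip (n i) e e)).
  { unfold bsub, d, e. rewrite <- Hx. unfold ip. fsum_merge. apply fsum_le. intros j Hj.
    replace (x k i j - z k0 i j) with ((x k i j - z k i j) + (z k i j - z k0 i j)) by ring.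
    apply sq_add_le_weighted; auto; lra. }
  assert (Hstep : / gamma i * ip (n i) d d <= W).
  { eapply Rle_trans; [|apply (step_len_le_window x k0 P t Ht)].
    fold k. unfold step_len. eapply Rle_trans; [|apply (qnorm_block_le _ i Hi)].
    right. f_equal. pose proof (Hupd k i) as Hu. rewrite HI in Hu.
    unfold ip, bsub, d. rewrite Hu. apply fsum_ext; intros; ring. }
  assert (Hcontr : / gamma i * ip (n i) e e <= (1 - del) ^ 2 * (beta * W)).
  { eapply Rle_trans; [apply (qnorm_block_le (bsub (z k) (z k0)) i Hi)|].
    eapply Rle_trans; [apply (in_T_contraction (x k) (z k) (x k0) (z k0) del (HT k) (HT k0) Hd Hdi)|].
    apply Rmult_le_compat_l; [apply pow2_ge_0 | apply Hdrift; auto]. }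
  assert (0 < / th) by (apply Rinv_0_lt_compat; auto).
  assert ((1 + th) * (/ gamma i * ip (n i) d d) <= (1 + th) * W)
    by (apply Rmult_le_compat_l; lra).
  assert ((1 + / th) * (/ gamma i * ip (n i) e e) <= (1 + / th) * ((1 - del) ^ 2 * (beta * W)))
    by (apply Rmult_le_compat_l; lra).
  lra.
Qed.

Lemma envelope_window_contraction I x z k0 P xs m del Dl beta th :
  algorithm_BC N n grad G gamma I x z -> is_minimizer N f G xs -> Phi N f G xs = fin m ->
  0 < del < 1 -> (forall i, (i < N)%nat -> del <= gamma i * mu i / INR N) ->
  (forall i, (i < N)%nat -> gamma i * L i / INR N <= Dl) -> Dl < 1 -> 0 < th -> 0 <= beta ->
  window_covers I x k0 P ->
  (forall t, (t < P)%nat -> qnorm (bsub (x (k0 + t)%nat) (x k0)) <= beta * window_len x k0 P) ->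
  envelope (x (k0 + P)%nat) (z (k0 + P)%nat) - m
  <= (1 - del * (1 - Dl) / (INR N * ((1 + th) + (1 + / th) * (1 - del) ^ 2 * beta) * (1 - del)))
     * (envelope (x k0) (z k0) - m).
Proof.
  intros Halg Hmin Hxs Hd Hdi HDl HDl1 Hth Hb Hcov Hdrift.
  pose proof (proj1 (proj2 Halg)) as HT.
  set (K := INR N * ((1 + th) + (1 + / th) * (1 - del) ^ 2 * beta)).
  set (W := window_len x k0 P).
  set (A := envelope (x k0) (z k0) - m).
  assert (HK : 0 < K)
    by (apply Rmult_lt_0_compat; [apply INR_N_pos | apply window_constant_pos; auto]).
  assert (HA : 0 <= A) by (pose proof (min_le_envelope _ _ xs m (HT k0) Hmin Hxs); unfold A; lra).
  pose proof (envelope_window_decrease I x z Dl k0 P Halg HDl) as Hdec. fold W in Hdec.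
  assert (HAW : A <= (/ del - 1) / 2 * (K * W)).
  { eapply Rle_trans;
      [apply (envelope_error_bound (x k0) (z k0) xs m del (HT k0) Hxs); [lra | exact Hdi]|].
    apply Rmult_le_compat_l.
    - assert (1 < / del) by (rewrite <- Rinv_1; apply Rinv_lt_contravar; lra). lra.
    - pose proof (residual_window_bound I x z k0 P del beta th Halg ltac:(lra) Hdi Hth Hcov Hdrift)
        as Hres.
      fold W in Hres. unfold K. nra. }
  set (c := del * (1 - Dl) / (K * (1 - del))).
  assert (Hc : c * ((/ del - 1) / 2 * (K * W)) = (1 - Dl) / 2 * W) by (unfold c; field; lra).
  assert (Hc0 : 0 <= c)
    by (unfold c; apply Rmult_le_pos; [nra | left; apply Rinv_0_lt_compat; nra]).
  assert (c * A <= c * ((/ del - 1) / 2 * (K * W))) by (apply Rmult_le_compat_l; auto).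
  fold K c A. unfold A in *. lra.
Qed.

(* optimality of xs along the segment towards w, with the descent lemma for F *)
Lemma minimizer_first_order xs w gs gw : is_minimizer N f G xs -> G xs = fin gs -> G w = fin gw ->
  gs <= gw + bip N n (gradF N grad xs) (bsub w xs).
Proof.
  intros Hmin Hgs Hw.
  set (b := bip N n (gradF N grad xs) (bsub w xs)).
  set (Lw := fsum N (fun i => L i / INR N * ip (n i) (bsub w xs i) (bsub w xs i))).
  assert (HLw : 0 <= Lw).
  { apply fsum_nonneg. intros i Hi. destruct (HL i Hi). pose proof INR_N_pos.
    apply Rmult_le_pos; [apply Rle_mult_inv_pos; lra | apply ip_nonneg]. }
  apply (Rle_of_le_plus_small _ _ (Lw / 2) 1); [lra|]. intros t Ht.
  set (y := bcomb t w xs).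
  pose proof (HGcvx w xs gw gs t Hw Hgs Ht) as Hc. fold y in Hc.
  destruct HGp as [Hn _].
  destruct (G y) as [| gy |] eqn:HGy; [elim (Hn y); auto | | simpl in Hc; tauto]. simpl in Hc.
  pose proof (Hmin y) as Hmy. unfold Phi in Hmy. rewrite Hgs, HGy in Hmy. simpl in Hmy.
  pose proof (Fsm_descent xs y) as Hdesc.
  replace (bsub y xs) with (fun i j => t * bsub w xs i j) in Hdesc
    by (unfold y, bcomb, bsub; extensionality i; extensionality j; ring).
  replace (bip N n (gradF N grad xs) (fun i j => t * bsub w xs i j)) with (t * b) in Hdesc
    by (unfold b, bip; rewrite <- fsum_scal; apply fsum_ext; intros; symmetry; apply ip_scal_r).
  replace (fsum N (fun i => L i / INR N * ip (n i) (fun j => t * bsub w xs i j)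
                                                    (fun j => t * bsub w xs i j)))
    with (t * t * Lw) in Hdesc
    by (unfold Lw; fsum_merge; apply fsum_ext; intros; unfold ip; fsum_merge;
        apply fsum_ext; intros; ring).
  apply Rmult_le_reg_l with t; [lra|]. nra.
Qed.

Lemma quadratic_growth xs m w gw : is_minimizer N f G xs -> Phi N f G xs = fin m -> G w = fin gw ->
  1 / 2 * wbnsq N n (fun i => mu i / INR N) (bsub w xs) <= Fsm N f w + gw - m.
Proof.
  intros Hmin Hxs Hw.
  unfold Phi in Hxs. destruct (G xs) as [| gs |] eqn:Hgs; simpl in Hxs; try discriminate.
  injection Hxs as Hm.
  pose proof (minimizer_first_order xs w gs gw Hmin Hgs Hw).
  pose proof (Fsm_strong_convexity xs w). unfold wbnsq. lra.
Qed.

Lemma envelope_le_Phi x z a : in_T N n grad G gamma x z -> Phi N f G x = fin a -> envelope x z <= a.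
Proof.
  intros HT Ha. unfold Phi in Ha.
  destruct (G x) as [| gx |] eqn:Hgx; simpl in Ha; try discriminate. injection Ha as Ha.
  pose proof (envelope_le_fb_model x z x gx HT Hgx) as Hle. rewrite fb_model_self in Hle. lra.
Qed.

Lemma linear_rates_of_window_contraction I x z P c : algorithm_BC N n grad G gamma I x z ->
  0 <= 1 - c ->
  (forall xs m, is_minimizer N f G xs -> Phi N f G xs = fin m -> forall nu,
     envelope (x (P * (nu + 1))%nat) (z (P * (nu + 1))%nat) - m
     <= (1 - c) * (envelope (x (P * nu)%nat) (z (P * nu)%nat) - m)) ->
  linear_rates N n f grad G gamma mu x z P c.
Proof.
  intros Halg Hc Hstep xs m Hmin Hxs nu.
  pose proof (proj1 (proj2 Halg)) as HT.
  split.
  - intros b Hb. rewrite (FBE_eq_envelope _ _ (HT _)) in Hb. injection Hb as <-.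
    rewrite (FBE_eq_envelope _ _ (HT _)).
    simpl. pose proof (Hstep xs m Hmin Hxs nu). lra.
  - intros a Ha.
    assert (Hgeo : forall k, envelope (x (P * k)%nat) (z (P * k)%nat) - m
                             <= (1 - c) ^ k * (envelope (x 0%nat) (z 0%nat) - m)).
    { induction k as [|k IH].
      - rewrite Nat.mul_0_r. simpl. lra.
      - replace (P * S k)%nat with (P * (k + 1))%nat by lia.
        eapply Rle_trans; [apply (Hstep xs m Hmin Hxs)|].
        simpl. rewrite Rmult_assoc. apply Rmult_le_compat_l; auto. }
    pose proof (envelope_le_Phi _ _ a (HT 0%nat) Ha).
    assert (Hpow : 0 <= (1 - c) ^ nu) by (apply pow_le; auto).
    assert (Henv : envelope (x (P * nu)%nat) (z (P * nu)%nat) - m <= (a - m) * (1 - c) ^ nu).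
    { eapply Rle_trans; [apply Hgeo|]. rewrite Rmult_comm. apply Rmult_le_compat_r; lra. }
    pose proof (Phi_le_envelope _ _ (HT (P * nu)%nat)).
    pose proof (in_T_G_fin _ _ (HT (P * nu)%nat)) as HGz.
    split.
    + unfold Phi. rewrite HGz. simpl. lra.
    + pose proof (quadratic_growth xs m _ _ Hmin Hxs HGz). lra.
Qed.

(* Without a block of positive dimension nothing forces mu_i <= L_i, so delta < 1 may fail; but
   then F, G and the envelope are constant and every rate holds. *)
Lemma linear_rates_zero_dim I x z P c :
  (forall i, (i < N)%nat -> fun_on (n i) (f i)) -> bfun_on N n G ->
  algorithm_BC N n grad G gamma I x z -> (forall i, (i < N)%nat -> n i = 0%nat) ->
  linear_rates N n f grad G gamma mu x z P c.
Proof.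
  intros Hf_on HG_on Halg Hn0 xs m Hmin Hxs nu.
  pose proof (proj1 (proj2 Halg)) as HT.
  assert (Hwb : forall w a, wbnsq N n w a = 0).
  { intros w a. unfold wbnsq. rewrite <- (fsum_zero N). apply fsum_ext. intros i Hi.
    unfold ip. rewrite (Hn0 i Hi). simpl. ring. }
  assert (Hbip : forall a b, bip N n a b = 0).
  { intros a b. unfold bip. rewrite <- (fsum_zero N). apply fsum_ext. intros i Hi.
    unfold ip. rewrite (Hn0 i Hi). reflexivity. }
  assert (HF : forall u, Fsm N f u = Fsm N f xs).
  { intros u. unfold Fsm. f_equal. apply fsum_ext. intros i Hi. apply (Hf_on i Hi).
    intros j Hj. rewrite (Hn0 i Hi) in Hj. lia. }
  assert (HG : forall u, G u = G xs).
  { intros u. apply HG_on. intros i j Hi Hj. rewrite (Hn0 i Hi) in Hj. lia. }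
  unfold Phi in Hxs. destruct (G xs) as [| gs |] eqn:Hgs; simpl in Hxs; try discriminate.
  injection Hxs as Hm.
  assert (Henv : forall k, envelope (x k) (z k) = m).
  { intros k. apply Rle_antisym.
    - pose proof (envelope_le_fb_model _ _ xs gs (HT k) Hgs) as Hle.
      unfold fb_model, qnorm in Hle. rewrite Hbip, Hwb, HF in Hle. lra.
    - apply (min_le_envelope _ _ xs m (HT k) Hmin). unfold Phi. rewrite Hgs. simpl. f_equal. auto. }
  split.
  - intros b Hb. rewrite (FBE_eq_envelope _ _ (HT _)), Henv in Hb. injection Hb as <-.
    rewrite (FBE_eq_envelope _ _ (HT _)), Henv. simpl. lra.
  - intros a Ha. unfold Phi in Ha. rewrite HG, HF in Ha. simpl in Ha. injection Ha as <-.
    unfold Phi. rewrite HG, HF, Hwb. simpl. rewrite Hm. split; lra.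
Qed.

(** * Sampling rules *)

Lemma qnorm_drift_le x k0 t : qnorm (bsub (x (k0 + t)%nat) (x k0)) <= INR t * window_len x k0 t.
Proof.
  induction t as [|t IH].
  - rewrite Nat.add_0_r, qnorm_sub_self. simpl. lra.
  - set (a := bsub (x (k0 + t)%nat) (x k0)) in IH.
    set (b := bsub (x (S (k0 + t))) (x (k0 + t)%nat)).
    replace (bsub (x (k0 + S t)%nat) (x k0)) with (fun i j => a i j + b i j)
      by (unfold a, b; rewrite Nat.add_succ_r; extensionality i; extensionality j; unfold bsub; ring).
    change (window_len x k0 (S t)) with (window_len x k0 t + qnorm b). rewrite S_INR.
    pose proof (window_len_nonneg x k0 t). pose proof (qnorm_nonneg b).
    destruct (Nat.eq_dec t 0) as [->|Ht].
    + replace (fun i j => a i j + b i j) with b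
        by (unfold a, b; rewrite Nat.add_0_r; extensionality i; extensionality j; unfold bsub; ring).
      simpl INR. lra.
    + (* Young's inequality with weight 1 / t *)
      assert (Hr : 0 < INR t) by (apply lt_0_INR; lia).
      pose proof (qnorm_add_le a b (/ INR t) ltac:(apply Rinv_0_lt_compat; auto)) as Hyoung.
      rewrite Rinv_inv in Hyoung.
      assert (Ha : (1 + / INR t) * qnorm a <= (INR t + 1) * window_len x k0 t).
      { replace ((INR t + 1) * window_len x k0 t) with ((1 + / INR t) * (INR t * window_len x k0 t))
          by (field; lra).
        apply Rmult_le_compat_l; auto. assert (0 < / INR t) by (apply Rinv_0_lt_compat; auto). lra. }
      lra.
Qed.

Lemma block_unchanged I x z k0 i t : algorithm_BC N n grad G gamma I x z ->
  (forall s, (s < t)%nat -> I (S (k0 + s)) i = false) -> x (k0 + t)%nat i = x k0 i.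
Proof.
  intros [_ [_ Hupd]]. induction t as [|t IH]; intros Hs.
  - rewrite Nat.add_0_r. reflexivity.
  - rewrite Nat.add_succ_r, Hupd, Hs by lia. apply IH. intros; apply Hs; lia.
Qed.

Lemma window_covers_of_essentially_cyclic I x z T k0 : algorithm_BC N n grad G gamma I x z ->
  essentially_cyclic N I T -> window_covers I x k0 T.
Proof.
  intros Halg Hec i Hi. destruct (Hec k0 i Hi) as [t1 [Ht1 HI1]].
  destruct (first_true (fun s => I (S (k0 + s)) i) (t1 - 1)) as [t [Ht [HIt Hfirst]]].
  { replace (S (k0 + (t1 - 1))) with (k0 + t1)%nat by lia. auto. }
  exists t. repeat split; auto; [lia|]. apply (block_unchanged I x z); auto.
Qed.

Lemma shuffled_cyclic_index (I : nat -> nat -> bool) (pi : nat -> nat -> nat) nu s i :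
  (forall k i, I (S k) i = true <-> i = pi (Nat.div k N) (Nat.modulo k N)) ->
  (s < N)%nat -> (I (S (N * nu + s)) i = true <-> i = pi nu s).
Proof.
  intros HI Hs. rewrite HI.
  replace (Nat.div (N * nu + s) N) with nu
    by (rewrite (Nat.mul_comm N nu), Nat.div_add_l, Nat.div_small by lia; lia).
  replace (Nat.modulo (N * nu + s) N) with s
    by (rewrite Nat.add_comm, Nat.mul_comm, Nat.Div0.mod_add, Nat.mod_small; auto).
  reflexivity.
Qed.

(* a permutation updates each block once per epoch *)
Lemma shuffled_first_update I x z pi nu t i : algorithm_BC N n grad G gamma I x z ->
  (forall p, perm_of_N N (pi p)) ->
  (forall k i, I (S k) i = true <-> i = pi (Nat.div k N) (Nat.modulo k N)) ->
  (t < N)%nat -> I (S (N * nu + t)) i = true -> x (N * nu + t)%nat i = x (N * nu)%nat i.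
Proof.
  intros Halg Hperm HI Ht HIt. apply (block_unchanged I x z); auto.
  intros s Hs. destruct (I (S (N * nu + s)) i) eqn:HIs; auto.
  apply (shuffled_cyclic_index I pi nu s i HI) in HIs; [|lia].
  apply (shuffled_cyclic_index I pi nu t i HI) in HIt; auto.
  assert (s = t) by (apply (proj2 (Hperm nu)); lia). lia.
Qed.

Lemma window_covers_of_shuffled_cyclic I x z nu : algorithm_BC N n grad G gamma I x z ->
  shuffled_cyclic N I -> window_covers I x (N * nu) N.
Proof.
  intros Halg [pi [Hperm HI]] i Hi.
  destruct (Hperm nu) as [Hrange Hinj].
  destruct (proj1 (bInjective_bSurjective Hrange) Hinj i Hi) as [t [Ht Hpt]].
  assert (HIt : I (S (N * nu + t)) i = true) by (apply (shuffled_cyclic_index I pi nu t i HI); auto).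
  exists t. repeat split; auto. apply (shuffled_first_update I x z pi); auto.
Qed.

Lemma qnorm_drift_le_shuffled I x z nu t : algorithm_BC N n grad G gamma I x z ->
  shuffled_cyclic N I -> (t <= N)%nat ->
  qnorm (bsub (x (N * nu + t)%nat) (x (N * nu)%nat)) <= window_len x (N * nu) t.
Proof.
  intros Halg [pi [Hperm HI]]. pose proof Halg as [_ [_ Hupd]].
  set (k0 := (N * nu)%nat). induction t as [|t IH]; intros Ht.
  - rewrite Nat.add_0_r, qnorm_sub_self. unfold window_len. simpl. lra.
  - change (window_len x k0 (S t)) with (window_len x k0 t + step_len x (k0 + t)).
    enough (qnorm (bsub (x (k0 + S t)%nat) (x k0))
            <= qnorm (bsub (x (k0 + t)%nat) (x k0)) + step_len x (k0 + t))
      by (specialize (IH ltac:(lia)); lra).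
    unfold step_len, qnorm, wbnsq. fsum_merge. apply fsum_le. intros i Hi.
    rewrite Nat.add_succ_r. unfold bsub. rewrite (Hupd (k0 + t)%nat i).
    destruct (I (S (k0 + t)) i) eqn:HIt.
    + pose proof (shuffled_first_update I x z pi nu t i Halg Hperm HI ltac:(lia) HIt) as Hfirst.
      fold k0 in Hfirst. rewrite Hfirst, ip_sub_self_l. lra.
    + rewrite ip_sub_self_l. lra.
Qed.

Lemma rates_essentially_cyclic I x z del Dl T : algorithm_BC N n grad G gamma I x z ->
  0 < del < 1 -> del <= Dl -> Dl < 1 ->
  (forall i, (i < N)%nat -> del <= gamma i * mu i / INR N) ->
  (forall i, (i < N)%nat -> gamma i * L i / INR N <= Dl) ->
  (1 <= T)%nat -> essentially_cyclic N I T ->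
  linear_rates N n f grad G gamma mu x z T
    (del * (1 - Dl) / (INR N * (1 + INR T * (1 - del)) ^ 2 * (1 - del))).
Proof.
  intros Halg Hd HdD HD1 Hdi HDi HT1 Hec.
  assert (HN1 : 1 <= INR N) by (apply (le_INR 1); lia).
  assert (HT1' : 1 <= INR T) by (apply (le_INR 1); lia).
  set (rho := 1 - del). assert (Hrho : 0 < rho) by (unfold rho; lra).
  apply (linear_rates_of_window_contraction I); auto.
  { apply contraction_factor_nonneg; auto. fold rho.
    assert (1 <= (1 + INR T * rho) ^ 2) by (assert (0 <= INR T * rho) by nra; simpl; nra). nra. }
  intros xs m Hmin Hxs nu. set (k0 := (T * nu)%nat).
  replace (T * (nu + 1))%nat with (k0 + T)%nat by (unfold k0; lia).
  (* the window contraction with beta = T and theta = (1 - delta) T *)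
  set (th := rho * INR T). assert (Hth : 0 < th) by (unfold th; nra).
  eapply Rle_trans.
  { apply (envelope_window_contraction I x z k0 T xs m del Dl (INR T) th); auto using pos_INR.
    - apply (window_covers_of_essentially_cyclic I x z); auto.
    - intros t Ht. eapply Rle_trans; [apply qnorm_drift_le|].
      apply Rmult_le_compat; auto using pos_INR, window_len_nonneg.
      + apply le_INR. lia.
      + apply window_len_le_length. lia. }
  apply contraction_factor_le; auto.
  - apply Rmult_lt_0_compat; [lra | apply window_constant_pos; lra].
  - apply Rmult_le_compat_l; [lra|]. fold rho. unfold th.
    replace ((1 + rho * INR T) + (1 + / (rho * INR T)) * rho ^ 2 * INR T)
      with (1 + rho * INR T + rho * rho * INR T + rho) by (field; nra).
    assert (rho <= rho * INR T) by nra.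
    assert (rho * rho * INR T <= rho * rho * INR T * INR T)
      by (assert (0 <= rho * rho * INR T) by nra; nra).
    simpl. nra.
  - pose proof (min_le_envelope _ _ xs m (proj1 (proj2 Halg) k0) Hmin Hxs). lra.
Qed.

Lemma rates_shuffled_cyclic I x z del Dl : algorithm_BC N n grad G gamma I x z ->
  0 < del < 1 -> del <= Dl -> Dl < 1 ->
  (forall i, (i < N)%nat -> del <= gamma i * mu i / INR N) ->
  (forall i, (i < N)%nat -> gamma i * L i / INR N <= Dl) ->
  shuffled_cyclic N I ->
  linear_rates N n f grad G gamma mu x z N (del * (1 - Dl) / (INR N * (2 - del) ^ 2 * (1 - del))).
Proof.
  intros Halg Hd HdD HD1 Hdi HDi Hsh.
  assert (HN1 : 1 <= INR N) by (apply (le_INR 1); lia).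
  set (rho := 1 - del). assert (Hrho : 0 < rho) by (unfold rho; lra).
  replace (2 - del) with (1 + rho) by (unfold rho; ring).
  apply (linear_rates_of_window_contraction I); auto.
  { apply contraction_factor_nonneg; auto. assert (1 <= (1 + rho) ^ 2) by (simpl; nra). nra. }
  intros xs m Hmin Hxs nu. set (k0 := (N * nu)%nat).
  replace (N * (nu + 1))%nat with (k0 + N)%nat by (unfold k0; lia).
  (* the window contraction with beta = 1 and theta = 1 - delta *)
  eapply Rle_trans.
  { apply (envelope_window_contraction I x z k0 N xs m del Dl 1 rho); auto; try lra.
    - apply (window_covers_of_shuffled_cyclic I x z); auto.
    - intros t Ht. rewrite Rmult_1_l. eapply Rle_trans;
        [apply (qnorm_drift_le_shuffled I x z nu t); auto; lia | apply window_len_le_length; lia]. }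
  fold rho. replace ((1 + rho) + (1 + / rho) * rho ^ 2 * 1) with ((1 + rho) ^ 2) by (field; lra).
  lra.
Qed.

Lemma bmin_step_sizes_le i : (i < N)%nat ->
  bmin (N - 1) (fun i => gamma i * mu i / INR N) <= gamma i * mu i / INR N.
Proof. intros Hi. apply (bmin_le _ (fun i => gamma i * mu i / INR N)). lia. Qed.

Lemma bmax_step_sizes_ge i : (i < N)%nat ->
  gamma i * L i / INR N <= bmax (N - 1) (fun i => gamma i * L i / INR N).
Proof. intros Hi. apply (bmax_ge _ (fun i => gamma i * L i / INR N)). lia. Qed.

Lemma bmin_step_sizes_pos : 0 < bmin (N - 1) (fun i => gamma i * mu i / INR N).
Proof.
  apply bmin_pos. intros i Hi. destruct (Hgamma i ltac:(lia)), (Hmu i ltac:(lia)).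
  apply Rdiv_lt_0_compat; [nra | apply INR_N_pos].
Qed.

Lemma bmax_step_sizes_lt_1 : bmax (N - 1) (fun i => gamma i * L i / INR N) < 1.
Proof.
  apply bmax_lt. intros i Hi. destruct (Hgamma i ltac:(lia)). pose proof INR_N_pos.
  apply (Rmult_lt_reg_r (INR N)); auto.
  replace (gamma i * L i / INR N * INR N) with (gamma i * L i) by (field; lra). lra.
Qed.

Lemma bmin_le_bmax_step_sizes i : (i < N)%nat -> (1 <= n i)%nat ->
  bmin (N - 1) (fun i => gamma i * mu i / INR N) <= bmax (N - 1) (fun i => gamma i * L i / INR N).
Proof.
  intros Hi Hni. pose proof (bmin_step_sizes_le i Hi). pose proof (bmax_step_sizes_ge i Hi).
  pose proof (strong_convexity_le_lipschitz (n i) (f i) (grad i) (Hgrad i Hi) (mu i) (L i) Hni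
                (proj2 (Hmu i Hi)) (proj2 (HL i Hi))).
  destruct (Hgamma i Hi). pose proof INR_N_pos.
  assert (gamma i * mu i / INR N <= gamma i * L i / INR N)
    by (apply Rmult_le_compat_r; [left; apply Rinv_0_lt_compat | nra]; auto).
  lra.
Qed.

End Problem.

Theorem theorem2p9
  (N : nat) (n : nat -> nat)
  (f : nat -> vec -> R) (grad : nat -> vec -> vec) (L mu : nat -> R)
  (G : bvec -> ER) (gamma : nat -> R)
  (HN : (1 <= N)%nat)
  (Hf_on : forall i, (i < N)%nat -> fun_on (n i) (f i))
  (Hgrad : forall i, (i < N)%nat -> has_gradient (n i) (f i) (grad i))
  (HL : forall i, (i < N)%nat -> 0 <= L i /\ lipschitz_grad (n i) (grad i) (L i))
  (Hmu : forall i, (i < N)%nat -> 0 < mu i /\ strongly_convex (n i) (f i) (mu i))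
  (HG_on : bfun_on N n G) (HGp : proper G) (HGlsc : lsc N n G) (HGcvx : convexG G)
  (Hargmin : exists xs, is_minimizer N f G xs)
  (Hgamma : forall i, (i < N)%nat -> 0 < gamma i /\ gamma i * L i < INR N)
  (I : nat -> nat -> bool) (x z : nat -> bvec)
  (Halg : algorithm_BC N n grad G gamma I x z) :
  let delta := bmin (N - 1) (fun i => gamma i * mu i / INR N) in
  let Delta := bmax (N - 1) (fun i => gamma i * L i / INR N) in
  (forall T : nat, (1 <= T)%nat -> essentially_cyclic N I T ->
     linear_rates N n f grad G gamma mu x z T
       (delta * (1 - Delta) /
        (INR N * (1 + INR T * (1 - delta)) ^ 2 * (1 - delta)))) /\
  (shuffled_cyclic N I ->
     linear_rates N n f grad G gamma mu x z N
       (delta * (1 - Delta) / (INR N * (2 - delta) ^ 2 * (1 - delta)))).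
Proof.
  intros delta Delta.
  destruct (classic (exists i, (i < N)%nat /\ (1 <= n i)%nat)) as [[i [Hi Hni]] | Hzero].
  2: { assert (Hn0 : forall i, (i < N)%nat -> n i = 0%nat).
       { intros i Hi. apply NNPP. intros Hni. apply Hzero. exists i. split; [auto | lia]. }
       split; intros; eapply linear_rates_zero_dim; eauto. }
  pose proof (bmin_step_sizes_pos N n f L mu gamma HN Hmu Hgamma) as Hd0.
  pose proof (bmax_step_sizes_lt_1 N L gamma HN Hgamma) as HD1.
  pose proof (bmin_le_bmax_step_sizes N n f grad L mu gamma HN Hgrad HL Hmu Hgamma i Hi Hni) as HdD.
  pose proof (bmin_step_sizes_le N mu gamma HN) as Hdi.
  pose proof (bmax_step_sizes_ge N L gamma HN) as HDi.
  fold delta Delta in Hd0, HD1, HdD, Hdi, HDi.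
  split.
  - intros T HT Hec.
    apply (rates_essentially_cyclic N n f grad L mu G gamma HN Hgrad HL Hmu HGp HGcvx Hgamma I);
      auto; lra.
  - intros Hsh.
    apply (rates_shuffled_cyclic N n f grad L mu G gamma HN Hgrad HL Hmu HGp HGcvx Hgamma I);
      auto; lra.
Qed.
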